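(* Let $\ell\ge4$ be such that $T_\ell$ is long, let $t\in\mathring T_\ell$, and let $\tau\in\mathbb{C}$ with $|\tau-t|<1/\sqrt{B(t)}$. Then for every $s$ with $4<s<B^{1/6}(t)$, \[ \left|\sum_{k\ge0:\,|k-A(t)|>s\sqrt{B(t)}}a_k^2e^{k\tau}\right|\le2H(\mathrm{Re}\,\tau)\exp\left(-\tfrac18(s-4)^2\right). \]
   Context: Let $G(z)=\sum_{n\ge0}a_n^2z^n$ be an entire function with $a_n\ge0$, infinitely many non-zero. Put $H(t)=G(e^t)=\sum a_n^2e^{nt}$, $A(t)=H'(t)/H(t)$, $B(t)=A'(t)$, and assume $B$ is non-decreasing and unbounded on $\mathbb{R}$. Choose points $t_\ell\uparrow\infty$ with $B(t_\ell)=\ell^6$ (for all $\ell$ for which this is possible), and set $T_\ell=[t_\ell,t_{\ell+1}]$. $T_\ell$ is called long if $t_{\ell+1}-t_\ell\ge8/\ell^2$, and then its interior is $\mathring T_\ell=[t_\ell+2/\ell^2,\,t_{\ell+1}-2/\ell^2]$. *)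

From Stdlib Require Import Reals Lra.
From Coquelicot Require Export Coquelicot.
Open Scope R_scope.

(* H(t) = G(e^t) = sum_n a_n^2 e^{n t} *)
Definition Hf (a : nat -> R) (t : R) : R :=
  Series (fun n => (a n) ^ 2 * exp (INR n * t)).

Definition Af (a : nat -> R) (t : R) : R := Derive (Hf a) t / Hf a t.
Definition Bf (a : nat -> R) (t : R) : R := Derive (Af a) t.

Definition cexp (z : C) : C :=
  (exp (Re z) * cos (Im z), exp (Re z) * sin (Im z)).

Definition tail_term (a : nat -> R) (t s : R) (tau : C) (k : nat) : C :=
  if Rlt_dec (s * sqrt (Bf a t)) (Rabs (INR k - Af a t))
  then RtoC ((a k) ^ 2) * cexp (RtoC (INR k) * tau)
  else RtoC 0.

From Stdlib Require Import Reals Lra.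
From Coquelicot Require Import Coquelicot.
Open Scope R_scope.

(* Chernoff's trick.  Write sigma = Re tau and r = s sqrt B(t).  On the tail
   |k - A(t)| > r one has 1 <= exp(lam (k - A(t) - r)) + exp(-lam (k - A(t) + r)),
   so the tail is at most
     exp(-lam (A(t) + r)) H(sigma + lam) + exp(lam (A(t) - r)) H(sigma - lam).
   Since (ln H)'' = B, Taylor's formula gives
     H(sigma +- lam) <= H(sigma) exp(+- lam A(sigma) + M lam^2 / 2)
   for any bound M of B between sigma and sigma +- lam, and |A(sigma) - A(t)| <= M |sigma - t|.
   In the interior of a long T_l, B <= B(t_(l+1)) = (l+1)^6 <= 4 B(t) on the window of
   radius 1/(2 l^2) around t, which contains sigma +- lam for lam = (s - 4) / (4 sqrt B(t));
   with M = 4 B(t) and this lam the exponent is at most -(s - 4)^2 / 8. *)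

Lemma exp_le_compat (x y : R) : x <= y -> exp x <= exp y.
Proof.
  intros [Hlt | ->]; [now left; apply exp_increasing | apply Rle_refl].
Qed.

Lemma exp_INR_mul (n : nat) (x : R) : exp (INR n * x) = exp x ^ n.
Proof.
  rewrite <- Rpower_pow by apply exp_pos.
  unfold Rpower. now rewrite ln_exp.
Qed.

Lemma Cmod_cexp (z : C) : Cmod (cexp z) = exp (Re z).
Proof.
  unfold cexp, Cmod; cbn [fst snd].
  replace ((exp (Re z) * cos (Im z)) ^ 2 + (exp (Re z) * sin (Im z)) ^ 2)
    with (exp (Re z) ^ 2).
  - apply sqrt_pow2. left; apply exp_pos.
  - pose proof (sin2_cos2 (Im z)) as Hsc. unfold Rsqr in Hsc. nra.
Qed.

Lemma Rabs_Re_sub_le_Cmod (z : C) (x : R) : Rabs (Re z - x) <= Cmod (z - RtoC x).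
Proof.
  replace (Re z - x) with (Re (z - RtoC x)) by (destruct z; simpl; ring).
  apply re_le_Cmod.
Qed.

Lemma is_derive_MVT (f df : R -> R) (x y : R) :
  (forall u, is_derive f u (df u)) ->
  exists e, Rmin x y <= e <= Rmax x y /\ f y - f x = df e * (y - x).
Proof.
  intro Hf.
  apply MVT_gen; intros u _; [apply Hf |].
  apply continuity_pt_filterlim, (ex_derive_continuous f).
  eexists; apply Hf.
Qed.

Lemma is_series_nonneg_ge_term (f : nat -> R) (l : R) (n : nat) :
  (forall k, 0 <= f k) -> is_series f l -> f n <= l.
Proof.
  intros Hf Hl.
  apply Rle_trans with (sum_n f n).
  - destruct n as [| n]; [rewrite sum_O; apply Rle_refl |].
    rewrite sum_Sn.
    assert (Hpos : 0 <= sum_n f n).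
    { pose proof (sum_n_m_le (fun _ => zero) f 0 n Hf) as Hle.
      now rewrite sum_n_m_const_zero in Hle. }
    change (plus (sum_n f n) (f (S n))) with (sum_n f n + f (S n)). lra.
  - apply (is_lim_seq_incr_compare (sum_n f)); [exact Hl |].
    intro m. rewrite sum_Sn. specialize (Hf (S m)).
    change (plus (sum_n f m) (f (S m))) with (sum_n f m + f (S m)). lra.
Qed.

Lemma is_series_Cmod_le (f : nat -> C) (g : nat -> R) (Sf : C) (Sg : R) :
  is_series f Sf -> is_series g Sg -> (forall n, Cmod (f n) <= g n) ->
  Cmod Sf <= Sg.
Proof.
  intros Hf Hg Hfg.
  assert (Hpartial : forall N, norm (sum_n f N) <= sum_n g N).
  { intro N. eapply Rle_trans; [apply (norm_sum_n_m (K := C_AbsRing) f 0 N) |].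
    now apply sum_n_m_le. }
  assert (Hnorm : is_lim_seq (fun N => norm (sum_n f N)) (norm Sf)).
  { eapply filterlim_comp; [exact Hf | apply filterlim_norm]. }
  exact (is_lim_seq_le _ (sum_n g) _ Sg Hpartial Hnorm Hg).
Qed.

Lemma one_le_chernoff_weight (lam r y : R) :
  0 < lam -> r < Rabs y -> 1 <= exp (lam * (y - r)) + exp (- lam * (y + r)).
Proof.
  intros Hlam Hr.
  pose proof (exp_pos (lam * (y - r))). pose proof (exp_pos (- lam * (y + r))).
  pose proof (exp_ineq1_le (lam * (y - r))). pose proof (exp_ineq1_le (- lam * (y + r))).
  destruct (Rle_or_lt 0 y).
  - rewrite Rabs_right in Hr by lra. nra.
  - rewrite Rabs_left in Hr by lra. nra.
Qed.

Lemma gaussian_exponent_le (lam q s e : R) :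
  lam * q = (s - 4) / 4 -> e <= s - 4 ->
  e - lam * (s * q) + 2 * q ^ 2 * lam ^ 2 <= - (1 / 8) * (s - 4) ^ 2.
Proof.
  intros Hlq He.
  replace (lam * (s * q)) with (s * (lam * q)) by ring.
  replace (2 * q ^ 2 * lam ^ 2) with (2 * (lam * q) ^ 2) by ring.
  rewrite Hlq. nra.
Qed.

Lemma CV_radius_infty_gt (d : nat -> R) (x : R) :
  CV_radius d = p_infty -> Rbar_lt (Rabs x) (CV_radius d).
Proof. now intros ->. Qed.

Lemma is_derive_PSeries_exp (d : nat -> R) (x : R) :
  CV_radius d = p_infty ->
  is_derive (fun y => PSeries d (exp y)) x (exp x * PSeries (PS_derive d) (exp x)).
Proof.
  intro Hd.
  apply (is_derive_comp (PSeries d) exp); [| apply is_derive_exp].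
  now apply is_derive_PSeries, CV_radius_infty_gt.
Qed.

Section Hf_analysis.

Variable a : nat -> R.
Hypothesis a_entire : CV_radius (fun n => a n ^ 2) = p_infty.
Hypothesis a_nonzero : exists n, a n <> 0.

Let c (n : nat) : R := a n ^ 2.

Lemma Hf_PSeries (x : R) : Hf a x = PSeries c (exp x).
Proof.
  apply Series_ext; intro n. unfold c. now rewrite exp_INR_mul.
Qed.

Lemma is_series_Hf (x : R) :
  is_series (fun n => a n ^ 2 * exp (INR n * x)) (Hf a x).
Proof.
  rewrite Hf_PSeries.
  apply is_series_ext with (fun n => c n * exp x ^ n).
  { intro n. now rewrite exp_INR_mul. }
  apply is_pseries_R, PSeries_correct, CV_radius_inside, CV_radius_infty_gt, a_entire.
Qed.

Lemma Hf_pos (x : R) : 0 < Hf a x.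
Proof.
  destruct a_nonzero as [n Hn].
  apply Rlt_le_trans with (a n ^ 2 * exp (INR n * x)).
  - apply Rmult_lt_0_compat; [now apply pow2_gt_0 | apply exp_pos].
  - apply (is_series_nonneg_ge_term (fun k => a k ^ 2 * exp (INR k * x)));
      [| apply is_series_Hf].
    intro k. apply Rmult_le_pos; [apply pow2_ge_0 | left; apply exp_pos].
Qed.

Lemma is_derive_Hf (x : R) :
  is_derive (Hf a) x (exp x * PSeries (PS_derive c) (exp x)).
Proof.
  apply is_derive_ext with (fun y => PSeries c (exp y)).
  { intro y. now rewrite Hf_PSeries. }
  now apply is_derive_PSeries_exp.
Qed.

Lemma is_derive_Af (x : R) : is_derive (Af a) x (Bf a x).
Proof.
  apply Derive_correct.
  apply ex_derive_ext with
    (fun y => exp y * PSeries (PS_derive c) (exp y) / PSeries c (exp y)).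
  { intro y. unfold Af. now rewrite (is_derive_unique _ _ _ (is_derive_Hf y)), Hf_PSeries. }
  apply ex_derive_div.
  - apply ex_derive_mult; [eexists; apply is_derive_exp |].
    apply (ex_derive_comp (PSeries (PS_derive c)) exp); [| eexists; apply is_derive_exp].
    eexists. apply is_derive_PSeries, CV_radius_infty_gt.
    now rewrite CV_radius_derive.
  - eexists. now apply is_derive_PSeries_exp.
  - rewrite <- Hf_PSeries. apply Rgt_not_eq, Hf_pos.
Qed.

Lemma Af_lipschitz (x y M : R) :
  (forall u, Rabs (u - x) <= Rabs (y - x) -> Rabs (Bf a u) <= M) ->
  Rabs (Af a y - Af a x) <= M * Rabs (y - x).
Proof.
  intro HB.
  destruct (is_derive_MVT (Af a) (Bf a) x y is_derive_Af) as [e [He ->]].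
  rewrite Rabs_mult. apply Rmult_le_compat_r; [apply Rabs_pos |].
  apply HB. rewrite Rmin_comm, Rmax_comm in He. now apply Rabs_le_between_min_max.
Qed.

Lemma ln_Hf_le_taylor (x y M : R) :
  (forall u, Rabs (u - x) <= Rabs (y - x) -> Bf a u <= M) ->
  ln (Hf a y) <= ln (Hf a x) + (y - x) * Af a x + M / 2 * (y - x) ^ 2.
Proof.
  intro HB.
  set (g u := ln (Hf a u) - (u - x) * Af a x - M / 2 * (u - x) ^ 2).
  assert (Dg : forall u, is_derive g u (Af a u - Af a x - M * (u - x))).
  { intro u. unfold g. auto_derive.
    - split; [eexists; apply is_derive_Hf | split; [apply Hf_pos | exact I]].
    - change (Derive (fun y => Hf a y) u) with (Derive (Hf a) u).
      unfold Af. field. split; apply Rgt_not_eq, Hf_pos. }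
  destruct (is_derive_MVT g _ x y Dg) as [e [He Hg]].
  destruct (is_derive_MVT (Af a) (Bf a) x e is_derive_Af) as [f [Hf' HA]].
  assert (Hprod : 0 <= (e - x) * (y - x)).
  { revert He. unfold Rmin, Rmax. destruct Rle_dec; intros; nra. }
  rewrite Rmin_comm, Rmax_comm in He, Hf'.
  apply Rabs_le_between_min_max in He, Hf'.
  specialize (HB f ltac:(lra)).
  assert (Hdecr : g y - g x <= 0).
  { rewrite Hg, HA.
    assert (0 <= (M - Bf a f) * ((e - x) * (y - x))) by (apply Rmult_le_pos; lra).
    lra. }
  unfold g in Hdecr. lra.
Qed.

Lemma exp_mul_Hf_shift_le (x h k M : R) :
  (forall u, Rabs (u - x) <= Rabs h -> Bf a u <= M) ->
  exp k * Hf a (x + h) <= Hf a x * exp (k + h * Af a x + M / 2 * h ^ 2).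
Proof.
  intro HB.
  assert (Htaylor := ln_Hf_le_taylor x (x + h) M).
  replace (x + h - x) with h in Htaylor by ring.
  specialize (Htaylor HB).
  rewrite <- (exp_ln (Hf a (x + h))), <- (exp_ln (Hf a x)) by apply Hf_pos.
  rewrite <- !exp_plus. apply exp_le_compat. lra.
Qed.

Lemma is_series_chernoff_majorant (K r sg lam : R) :
  is_series (fun k => a k ^ 2 * exp (INR k * sg) *
                      (exp (lam * (INR k - K - r)) + exp (- lam * (INR k - K + r))))
    (exp (- lam * (K + r)) * Hf a (sg + lam) + exp (lam * (K - r)) * Hf a (sg - lam)).
Proof.
  eapply is_series_ext;
    [| exact (is_series_plus _ _ _ _
                (is_series_scal (exp (- lam * (K + r))) _ _ (is_series_Hf (sg + lam)))
                (is_series_scal (exp (lam * (K - r))) _ _ (is_series_Hf (sg - lam))))].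
  intro k. change (exp (- lam * (K + r)) * (a k ^ 2 * exp (INR k * (sg + lam)))
                   + exp (lam * (K - r)) * (a k ^ 2 * exp (INR k * (sg - lam)))
                   = a k ^ 2 * exp (INR k * sg) *
                     (exp (lam * (INR k - K - r)) + exp (- lam * (INR k - K + r)))).
  assert (Eplus : exp (- lam * (K + r)) * exp (INR k * (sg + lam))
                  = exp (INR k * sg) * exp (lam * (INR k - K - r)))
    by (rewrite <- !exp_plus; f_equal; ring).
  assert (Eminus : exp (lam * (K - r)) * exp (INR k * (sg - lam))
                   = exp (INR k * sg) * exp (- lam * (INR k - K + r)))
    by (rewrite <- !exp_plus; f_equal; ring).
  transitivity (a k ^ 2 * (exp (- lam * (K + r)) * exp (INR k * (sg + lam)))
                + a k ^ 2 * (exp (lam * (K - r)) * exp (INR k * (sg - lam))));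
    [ring | rewrite Eplus, Eminus; ring].
Qed.

Lemma tail_le_shifted_Hf (t s : R) (tau : C) (lam : R) :
  0 < lam ->
  exists L, is_series (tail_term a t s tau) L /\
    Cmod L <= exp (- lam * (Af a t + s * sqrt (Bf a t))) * Hf a (Re tau + lam)
            + exp (lam * (Af a t - s * sqrt (Bf a t))) * Hf a (Re tau - lam).
Proof.
  intro Hlam.
  set (K := Af a t). set (r := s * sqrt (Bf a t)). set (sg := Re tau).
  set (u k := a k ^ 2 * exp (INR k * sg) *
    (exp (lam * (INR k - K - r)) + exp (- lam * (INR k - K + r)))).
  assert (Hu := is_series_chernoff_majorant K r sg lam).
  assert (Hdom : forall k, Cmod (tail_term a t s tau k) <= u k).
  { intro k. unfold tail_term. fold K r.
    assert (Hweight := one_le_chernoff_weight lam r (INR k - K) Hlam).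
    assert (Hterm : 0 <= a k ^ 2 * exp (INR k * sg))
      by (apply Rmult_le_pos; [apply pow2_ge_0 | left; apply exp_pos]).
    destruct (Rlt_dec r (Rabs (INR k - K))) as [Hr | Hr].
    - rewrite Cmod_mult, Cmod_R, Cmod_cexp, Rabs_right by (apply Rle_ge, pow2_ge_0).
      replace (Re (RtoC (INR k) * tau)) with (INR k * sg)
        by (unfold sg; destruct tau; simpl; ring).
      specialize (Hweight Hr).
      unfold u. nra.
    - rewrite Cmod_R, Rabs_R0. unfold u.
      apply Rmult_le_pos; [exact Hterm |].
      pose proof (exp_pos (lam * (INR k - K - r))).
      pose proof (exp_pos (- lam * (INR k - K + r))). lra. }
  destruct (ex_series_le (K := C_AbsRing) (V := C_CompleteNormedModule) _ u Hdom
              (ex_intro _ _ Hu)) as [L HL].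
  exists L. split; [exact HL |].
  exact (is_series_Cmod_le _ _ _ _ HL Hu Hdom).
Qed.

Lemma exp_mul_Hf_shift_le_gaussian (x h K q s : R) :
  Rabs h * q = (s - 4) / 4 -> Rabs h * Rabs (Af a x - K) <= s - 4 ->
  (forall u, Rabs (u - x) <= Rabs h -> Bf a u <= 4 * q ^ 2) ->
  exp (- h * K - Rabs h * (s * q)) * Hf a (x + h)
  <= Hf a x * exp (- (1 / 8) * (s - 4) ^ 2).
Proof.
  intros Hhq Hdrift HB.
  eapply Rle_trans; [exact (exp_mul_Hf_shift_le x h _ _ HB) |].
  apply Rmult_le_compat_l; [left; apply Hf_pos | apply exp_le_compat].
  replace (- h * K - Rabs h * (s * q) + h * Af a x + 4 * q ^ 2 / 2 * h ^ 2)
    with (h * (Af a x - K) - Rabs h * (s * q) + 2 * q ^ 2 * Rabs h ^ 2)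
    by (rewrite pow2_abs; field).
  apply gaussian_exponent_le; [exact Hhq |].
  eapply Rle_trans; [apply Rle_abs | now rewrite Rabs_mult].
Qed.

Lemma shifted_Hf_pair_le_gaussian (x K q s lam : R) :
  0 < lam -> lam * q = (s - 4) / 4 -> lam * Rabs (Af a x - K) <= s - 4 ->
  (forall u, Rabs (u - x) <= lam -> Bf a u <= 4 * q ^ 2) ->
  exp (- lam * (K + s * q)) * Hf a (x + lam) + exp (lam * (K - s * q)) * Hf a (x - lam)
  <= 2 * Hf a x * exp (- (1 / 8) * (s - 4) ^ 2).
Proof.
  intros Hlam Hlamq Hdrift HB.
  rewrite <- (Rabs_right lam) in Hlamq, Hdrift, HB by lra.
  assert (Hplus := exp_mul_Hf_shift_le_gaussian x lam K q s Hlamq Hdrift HB).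
  rewrite <- Rabs_Ropp in Hlamq, Hdrift, HB.
  assert (Hminus := exp_mul_Hf_shift_le_gaussian x (- lam) K q s Hlamq Hdrift HB).
  rewrite (Rabs_right lam) in Hplus by lra.
  rewrite Rabs_Ropp, (Rabs_right lam) in Hminus by lra.
  replace (- lam * K - lam * (s * q)) with (- lam * (K + s * q)) in Hplus by ring.
  replace (- - lam * K - lam * (s * q)) with (lam * (K - s * q)) in Hminus by ring.
  replace (x + - lam) with (x - lam) in Hminus by ring.
  lra.
Qed.

Lemma tail_le_gaussian (t s delta : R) (tau : C) :
  0 < Bf a t -> 4 < s ->
  (forall u, Rabs (u - t) <= delta -> 0 <= Bf a u <= 4 * Bf a t) ->
  Rabs (Re tau - t) < 1 / sqrt (Bf a t) ->
  Rabs (Re tau - t) + (s - 4) / (4 * sqrt (Bf a t)) <= delta ->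
  exists L, is_series (tail_term a t s tau) L /\
    Cmod L <= 2 * Hf a (Re tau) * exp (- (1 / 8) * (s - 4) ^ 2).
Proof.
  intros Hb Hs HB Hclose Hwindow.
  set (q := sqrt (Bf a t)) in *. set (sg := Re tau) in *.
  set (lam := (s - 4) / (4 * q)) in *.
  assert (Hq : 0 < q) by now apply sqrt_lt_R0.
  assert (Hq2 : q ^ 2 = Bf a t) by (apply pow2_sqrt; lra).
  assert (Hlam : 0 < lam) by (apply Rdiv_lt_0_compat; lra).
  assert (Hlamq : lam * q = (s - 4) / 4) by (unfold lam; field; lra).
  assert (Hqdist : q * Rabs (sg - t) <= 1).
  { apply (Rmult_lt_compat_l q) in Hclose; [| exact Hq].
    replace (q * (1 / q)) with 1 in Hclose by (field; lra). lra. }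
  assert (Hnear : forall u, Rabs (u - sg) <= lam -> Bf a u <= 4 * q ^ 2).
  { intros u Hu. rewrite Hq2. apply HB.
    pose proof (Rabs_triang (u - sg) (sg - t)) as Htri.
    replace (u - sg + (sg - t)) with (u - t) in Htri by ring. lra. }
  assert (Hdrift : lam * Rabs (Af a sg - Af a t) <= s - 4).
  { assert (Hlip : Rabs (Af a sg - Af a t) <= 4 * q ^ 2 * Rabs (sg - t)).
    { apply Af_lipschitz. intros u Hu. rewrite Hq2.
      assert (HBu : 0 <= Bf a u <= 4 * Bf a t) by (apply HB; lra).
      rewrite Rabs_right; lra. }
    apply Rle_trans with (4 * (lam * q) * (q * Rabs (sg - t))).
    - replace (4 * (lam * q) * (q * Rabs (sg - t)))
        with (lam * (4 * q ^ 2 * Rabs (sg - t))) by ring.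
      apply Rmult_le_compat_l; lra.
    - rewrite Hlamq. pose proof (Rabs_pos (sg - t)). nra. }
  destruct (tail_le_shifted_Hf t s tau lam Hlam) as [L [HL Hbound]].
  exists L. split; [exact HL |].
  eapply Rle_trans; [exact Hbound |].
  exact (shifted_Hf_pair_le_gaussian sg (Af a t) q s lam Hlam Hlamq Hdrift Hnear).
Qed.

End Hf_analysis.

Lemma monotone_level_window (B : R -> R) (x tl tl1 t : R) :
  (forall y z, y <= z -> B y <= B z) -> 4 <= x ->
  B tl = x ^ 6 -> B tl1 = (x + 1) ^ 6 ->
  tl + 2 / x ^ 2 <= t <= tl1 - 2 / x ^ 2 ->
  forall u, Rabs (u - t) <= 1 / (2 * x ^ 2) -> 0 <= B u <= 4 * B t.
Proof.
  intros Hmono Hx Htl Htl1 Ht u Hu.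
  assert (Hx2 : 0 < x ^ 2) by (apply pow_lt; lra).
  assert (Hmargin : 1 / (2 * x ^ 2) <= 2 / x ^ 2).
  { replace (1 / (2 * x ^ 2)) with (/ 4 * (2 / x ^ 2)) by (field; lra).
    assert (0 < 2 / x ^ 2) by (apply Rdiv_lt_0_compat; lra). lra. }
  apply Rabs_le_between' in Hu.
  assert (Hx6 : 0 < x ^ 6) by (apply pow_lt; lra).
  assert (Hgrowth : (x + 1) ^ 6 <= 4 * x ^ 6).
  { apply Rle_trans with ((5 / 4 * x) ^ 6); [apply pow_incr; lra |].
    replace ((5 / 4 * x) ^ 6) with (15625 / 4096 * x ^ 6) by field. lra. }
  assert (HBt : x ^ 6 <= B t) by (rewrite <- Htl; apply Hmono; lra).
  assert (HBu_low : x ^ 6 <= B u) by (rewrite <- Htl; apply Hmono; lra).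
  assert (HBu_high : B u <= (x + 1) ^ 6) by (rewrite <- Htl1; apply Hmono; lra).
  lra.
Qed.

Lemma pow6_le_Rpower_sixth (x b : R) : 0 < x -> x ^ 6 <= b -> x <= Rpower b (1 / 6).
Proof.
  intros Hx Hb.
  replace x with (Rpower (x ^ 6) (1 / 6)) at 1.
  - apply Rle_Rpower_l; [lra | split; [apply pow_lt |]; assumption].
  - rewrite <- Rpower_pow, Rpower_mult by exact Hx.
    replace (INR 6 * (1 / 6)) with 1 by (simpl; field).
    now apply Rpower_1.
Qed.

Lemma sqrt_eq_Rpower_sixth_cube (b : R) : 0 < b -> sqrt b = Rpower b (1 / 6) ^ 3.
Proof.
  intro Hb.
  rewrite <- Rpower_pow, Rpower_mult by (unfold Rpower; apply exp_pos).
  replace (1 / 6 * INR 3) with (/ 2) by (simpl; field).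
  now rewrite Rpower_sqrt.
Qed.

Lemma inv_cube_scales_le (x rho s : R) :
  4 <= x <= rho -> s < rho ->
  1 / rho ^ 3 <= 1 / (4 * x ^ 2) /\ (s - 4) / (4 * rho ^ 3) <= 1 / (4 * x ^ 2).
Proof.
  intros Hx Hs.
  assert (Hx2 : 0 < 4 * x ^ 2) by (pose proof (pow_lt x 2); lra).
  assert (Hrho3 : 4 * x ^ 2 <= rho ^ 3).
  { apply Rle_trans with (x ^ 3); [simpl; nra | apply pow_incr; lra]. }
  assert (Hinv : 1 / rho ^ 3 <= 1 / (4 * x ^ 2)).
  { unfold Rdiv. rewrite !Rmult_1_l. now apply Rinv_le_contravar. }
  split; [exact Hinv |].
  assert (Hrho : 0 < rho ^ 3) by lra.
  apply Rmult_le_reg_r with (4 * rho ^ 3 * (4 * x ^ 2)); [apply Rmult_lt_0_compat; lra |].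
  replace ((s - 4) / (4 * rho ^ 3) * (4 * rho ^ 3 * (4 * x ^ 2)))
    with ((s - 4) * (4 * x ^ 2)) by (field; lra).
  replace (1 / (4 * x ^ 2) * (4 * rho ^ 3 * (4 * x ^ 2))) with (4 * (rho * rho ^ 2))
    by (field; lra).
  apply Rle_trans with (rho * (4 * x ^ 2)); [apply Rmult_le_compat_r; lra |].
  assert (x ^ 2 <= rho ^ 2) by (apply pow_incr; lra).
  nra.
Qed.

Theorem lemma3p6 (a : nat -> R)
  (ha_nonneg : forall n, 0 <= a n)
  (ha_inf : forall N : nat, exists n : nat, (N <= n)%nat /\ a n <> 0)
  (hG_entire : CV_radius (fun n => (a n) ^ 2) = p_infty)
  (hB_mono : forall x y : R, x <= y -> Bf a x <= Bf a y)
  (hB_unbdd : ~ (exists M : R, forall x : R, Rabs (Bf a x) <= M))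
  (l : nat) (hl : (4 <= l)%nat)
  (tl tl1 : R)
  (htl : Bf a tl = INR l ^ 6)
  (htl1 : Bf a tl1 = INR (S l) ^ 6)
  (hlong : tl1 - tl >= 8 / INR l ^ 2)
  (t : R)
  (ht : tl + 2 / INR l ^ 2 <= t <= tl1 - 2 / INR l ^ 2)
  (tau : C)
  (htau : Cmod (tau - RtoC t) < 1 / sqrt (Bf a t))
  (s : R)
  (hs : 4 < s < Rpower (Bf a t) (1 / 6)) :
  exists S : C,
    is_series (tail_term a t s tau) S /\
    Cmod S <= 2 * Hf a (Re tau) * exp (- (1 / 8) * (s - 4) ^ 2).
Proof.
  assert (ha_nonzero : exists n, a n <> 0)
    by (destruct (ha_inf 0%nat) as [n [_ Hn]]; now exists n).
  assert (Hx : 4 <= INR l) by (apply (le_INR 4) in hl; simpl in hl; lra).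
  rewrite S_INR in htl1. set (x := INR l) in *.
  assert (Hwindow := monotone_level_window (Bf a) x tl tl1 t hB_mono Hx htl htl1 ht).
  assert (Hmargin : 0 < 2 / x ^ 2) by (apply Rdiv_lt_0_compat; [lra | apply pow_lt; lra]).
  assert (Hb : x ^ 6 <= Bf a t) by (rewrite <- htl; apply hB_mono; lra).
  assert (Hb0 : 0 < Bf a t) by (pose proof (pow_lt x 6 ltac:(lra)); lra).
  assert (Hq := sqrt_eq_Rpower_sixth_cube _ Hb0).
  set (rho := Rpower (Bf a t) (1 / 6)) in *.
  assert (Hxrho : x <= rho) by (apply pow6_le_Rpower_sixth; lra).
  destruct (inv_cube_scales_le x rho s ltac:(lra) ltac:(lra)) as [Hclose_scale Hlam_scale].
  assert (Hdist : Rabs (Re tau - t) < 1 / sqrt (Bf a t))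
    by exact (Rle_lt_trans _ _ _ (Rabs_Re_sub_le_Cmod tau t) htau).
  apply (tail_le_gaussian a hG_entire ha_nonzero t s (1 / (2 * x ^ 2)));
    [exact Hb0 | lra | exact Hwindow | exact Hdist |].
  rewrite Hq in Hdist |- *.
  replace (1 / (2 * x ^ 2)) with (1 / (4 * x ^ 2) + 1 / (4 * x ^ 2)) by (field; lra).
  lra.
Qed.
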